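(* Let $\vec v_1,\dots,\vec v_l$ be $l$ distinct unit vectors in $\mathbb{R}^3$ with multiplicities $m_i\in\mathbb{N}$ sorted in descending order ($m_1\ge m_2\ge\dots\ge m_l$), such that $\sum_{i=1}^l m_i=n$ for some $n\ge3$ and $m_1<\sum_{i=2}^l m_i$. For $\alpha\in[0,1)$ let $f_\alpha$ be the map on spherical coordinates $(\theta,\phi)\in[0,\pi]\times[0,2\pi]$ given by $f_\alpha(\theta,\phi)=\big(2\arctan\big(\tfrac{1}{1-\alpha}\tan(\theta/2)\big),\phi\big)$ (so that $\theta=0$ and $\theta=\pi$ are fixed), acting on unit vectors $\vec v=(\sin\theta\cos\phi,\sin\theta\sin\phi,\cos\theta)^T$. Then there exist a rotation $O\in SO(3)$ and $\alpha\in[0,1)$ such that the vectors $\vec v_i'=f_\alpha(O\vec v_i)$ satisfy $\sum_{i=1}^l m_i\vec v_i'=\vec 0$. *)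

From HB Require Import structures.
From mathcomp Require Import all_boot all_order all_algebra.
From mathcomp Require Import all_classical all_reals all_analysis.
Set Implicit Arguments. Unset Strict Implicit. Unset Printing Implicit Defensive.
Import Order.TTheory GRing.Theory Num.Theory.
Local Open Scope ring_scope.

Section Defs.
Variable R : realType.

Definition unit_vec (v : 'cV[R]_3) : Prop := \sum_(k < 3) (v k 0) ^+ 2 = 1.

Definition is_SO3 (O : 'M[R]_3) : Prop := O^T *m O = 1%:M /\ \det O = 1.

Definition sph (theta phi : R) : 'cV[R]_3 :=
  \col_(k < 3) [:: sin theta * cos phi; sin theta * sin phi; cos theta]`_k.

Definition sph_coords (v : 'cV[R]_3) (theta phi : R) : Prop :=
  0 <= theta <= pi /\ 0 <= phi <= 2 * pi /\ v = sph theta phi.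

(* Action of f_alpha on the polar angle: theta |-> 2 arctan(tan(theta/2)/(1-alpha)),
   with theta = pi fixed (the limiting value; tan(pi/2) is undefined). *)
Definition f_theta (alpha theta : R) : R :=
  if theta == pi then pi else 2 * atan ((1 - alpha)^-1 * tan (theta / 2)).

Definition f_alpha (alpha theta phi : R) : 'cV[R]_3 := sph (f_theta alpha theta) phi.

End Defs.

From HB Require Import structures.
From mathcomp Require Import all_boot all_order all_algebra.
From mathcomp Require Import all_classical all_reals all_analysis.
From mathcomp Require Import ring lra zify.
Import Order.TTheory GRing.Theory Num.Theory.
Import numFieldTopology.Exports numFieldNormedType.Exports.
Local Open Scope ring_scope.
Local Open Scope classical_set_scope.

(* The weighted points have a conformal barycentre.  On the open unit ball let
     Phi p = sum_i m_i ln |p - v_i|^2 - n ln (1 - |p|^2).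
   Near the unit sphere at most one [v_i] is close to [p], and it carries less
   than half of the total weight [n], so Phi tends to +oo at the boundary and
   attains an interior minimum.  The vanishing of its gradient there says exactly
   that the Mobius transformation of the ball sending the minimiser [p] to the
   origin moves the points to weighted centre of mass 0.  After a rotation taking
   [p] to [c] times the north pole, this transformation preserves meridians and
   acts on the polar angle by tan (theta' / 2) = (1 + c) / (1 - c) tan (theta / 2),
   i.e. it is [f_alpha] with alpha = 2 c / (1 + c). *)

Section RealCalculus.
Context {R : realType}.

Lemma is_derive_ln_comp (f : R -> R) (s df : R) :
  is_derive s 1 f df -> 0 < f s -> is_derive s 1 (fun t => ln (f t)) (df / f s).
Proof.
move=> fs fs0.
have dln : derivable (@ln R) (f s) 1 by apply: ex_derive; exact: is_derive1_ln.
have dc : derivable ((@ln R) \o f) s 1.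
  apply/derivable1_diffP; apply: differentiable_comp; last exact/derivable1_diffP.
  by apply/derivable1_diffP; exact: ex_derive.
apply: DeriveDef; first exact: dc.
rewrite -derive1E /= derive1_comp //.
rewrite !derive1E (@derive_val _ _ _ _ _ _ _ fs).
have [_ ->] := is_derive1_ln fs0.
by rewrite mulrC.
Qed.

Lemma is_derive_sumf {l : nat} {h : 'I_l -> R -> R} {s : R} {dh : 'I_l -> R} :
  (forall i, is_derive s 1 (h i) (dh i)) ->
  is_derive s 1 (fun t => \sum_(i < l) h i t) (\sum_(i < l) dh i).
Proof.
move=> hh; have := is_derive_sum hh.
by have -> : (\sum_(i < l) h i) = (fun t => \sum_(i < l) h i t) by apply/funext => t; rewrite fct_sumE.
Qed.

End RealCalculus.

Section RowEuclidean.
Context {R : realType} {d : nat}.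
Implicit Types (p e u v w : 'rV[R]_d) (a r s : R).

Definition vdot u v : R := \sum_k u 0 k * v 0 k.
Definition sqnorm u : R := vdot u u.

Lemma vdotC u v : vdot u v = vdot v u.
Proof. by apply: eq_bigr => k _; rewrite mulrC. Qed.

Lemma vdotDl u v w : vdot (u + v) w = vdot u w + vdot v w.
Proof. by rewrite -big_split; apply: eq_bigr => k _; rewrite mxE mulrDl. Qed.

Lemma vdotZl a u v : vdot (a *: u) v = a * vdot u v.
Proof. by rewrite mulr_sumr; apply: eq_bigr => k _; rewrite mxE mulrA. Qed.

Lemma vdotNl u v : vdot (- u) v = - vdot u v.
Proof. by rewrite -scaleN1r vdotZl mulN1r. Qed.

Lemma vdotBl u v w : vdot (u - v) w = vdot u w - vdot v w.
Proof. by rewrite vdotDl vdotNl. Qed.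

Lemma vdot0l v : vdot 0 v = 0.
Proof. by rewrite -(scale0r 0) vdotZl mul0r. Qed.

Lemma vdotDr u v w : vdot u (v + w) = vdot u v + vdot u w.
Proof. by rewrite vdotC vdotDl !(vdotC u). Qed.

Lemma vdotZr a u v : vdot u (a *: v) = a * vdot u v.
Proof. by rewrite vdotC vdotZl vdotC. Qed.

Lemma vdotBr u v w : vdot u (v - w) = vdot u v - vdot u w.
Proof. by rewrite vdotC vdotBl !(vdotC u). Qed.

Lemma vdot_suml (I : Type) (s : seq I) (P : pred I) (F : I -> 'rV[R]_d) w :
  vdot (\sum_(i <- s | P i) F i) w = \sum_(i <- s | P i) vdot (F i) w.
Proof. exact: (big_morph (vdot^~ w) (fun u v => vdotDl u v w) (vdot0l w)). Qed.

Lemma vdot_delta u k : vdot u (delta_mx 0 k) = u 0 k.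
Proof.
rewrite /vdot (bigD1 k) //= big1 => [|j jk]; first by rewrite mxE !eqxx mulr1 addr0.
by rewrite mxE (negbTE jk) andbF mulr0.
Qed.

Lemma vdotI u v : (forall w, vdot u w = vdot v w) -> u = v.
Proof. by move=> uv; apply/rowP => k; rewrite -!vdot_delta. Qed.

Lemma vdot_trmx u v : vdot u v = (u *m v^T) 0 0.
Proof. by rewrite mxE; apply: eq_bigr => k _; rewrite mxE. Qed.

Lemma mulmx_tr_vdot u w : u *m w^T = (vdot u w)%:M.
Proof. by apply/rowP => k; rewrite ord1 vdot_trmx !mxE eqxx mulr1n. Qed.

Lemma vdot_orthogonal (A : 'M[R]_d) u v :
  A *m A^T = 1%:M -> vdot (u *m A) (v *m A) = vdot u v.
Proof. by move=> AAT; rewrite !vdot_trmx trmx_mul mulmxA -(mulmxA u) AAT mulmx1. Qed.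

Lemma sqnorm0 : sqnorm (0 : 'rV[R]_d) = 0.
Proof. exact: vdot0l. Qed.

Lemma sqnorm_ge0 u : 0 <= sqnorm u.
Proof. by apply: sumr_ge0 => k _; rewrite -expr2 sqr_ge0. Qed.

Lemma sqnorm_eq0 u : (sqnorm u == 0) = (u == 0).
Proof.
apply/idP/eqP => [/eqP u0|->]; last by rewrite /sqnorm /vdot big1 // => k _; rewrite mxE mul0r.
have sq_ge0 j : true -> 0 <= u 0 j * u 0 j by rewrite -expr2 sqr_ge0.
apply/rowP => k; rewrite mxE; apply/eqP; rewrite -sqrf_eq0 expr2.
by rewrite (psumr_eq0P sq_ge0 u0).
Qed.

Lemma sqnormD u v : sqnorm (u + v) = sqnorm u + 2 * vdot u v + sqnorm v.
Proof. by rewrite /sqnorm !vdotDl !vdotDr (vdotC v u); ring. Qed.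

Lemma sqnormB u v : sqnorm (u - v) = sqnorm u - 2 * vdot u v + sqnorm v.
Proof. by rewrite /sqnorm !vdotBl !vdotBr (vdotC v u); ring. Qed.

Lemma sqnormZ a u : sqnorm (a *: u) = a ^+ 2 * sqnorm u.
Proof. by rewrite /sqnorm vdotZl vdotZr mulrA expr2. Qed.

Lemma sqnormN u : sqnorm (- u) = sqnorm u.
Proof. by rewrite -scaleN1r sqnormZ sqrrN expr1n mul1r. Qed.

Lemma sqnormBC u v : sqnorm (u - v) = sqnorm (v - u).
Proof. by rewrite -sqnormN opprB. Qed.

Lemma sqnormB_le u v : sqnorm (u - v) <= 2 * sqnorm u + 2 * sqnorm v.
Proof.
have := sqnorm_ge0 (u + v); rewrite sqnormD sqnormB -subr_ge0; lra.
Qed.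

Lemma sqnorm_orthogonal (A : 'M[R]_d) u : A *m A^T = 1%:M -> sqnorm (u *m A) = sqnorm u.
Proof. exact: vdot_orthogonal. Qed.

Lemma sqnorm_trmx (w : 'cV[R]_d) : sqnorm w^T = \sum_k w k 0 ^+ 2.
Proof. by apply: eq_bigr => k _; rewrite !mxE expr2. Qed.

Lemma sqr_coord_le_sqnorm u k : u 0 k ^+ 2 <= sqnorm u.
Proof.
rewrite /sqnorm /vdot (bigD1 k) //= expr2 lerDl.
by apply: sumr_ge0 => j _; rewrite -expr2 sqr_ge0.
Qed.

Lemma vdot_unit_sqr_le u v : sqnorm u = 1 -> vdot u v ^+ 2 <= sqnorm v.
Proof.
move=> u1; have := sqnorm_ge0 (v - vdot u v *: u).
by rewrite sqnormB sqnormZ u1 vdotZr (vdotC v u) -subr_ge0; lra.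
Qed.

Lemma sqnormB_unit_ge u v r : sqnorm u = 1 -> 0 <= r -> sqnorm v = r ^+ 2 ->
  (1 - r) ^+ 2 <= sqnorm (v - u).
Proof.
move=> u1 r0 vr; have := @vdot_unit_sqr_le u v u1.
rewrite sqnormB u1 vr (vdotC v u); set s := vdot u v => hs; nra.
Qed.

Lemma sqnormB_unit_gt0 u v : sqnorm u = 1 -> sqnorm v < 1 -> 0 < sqnorm (v - u).
Proof.
move=> u1 v1; have := @vdot_unit_sqr_le u v u1; have := sqnorm_ge0 v.
rewrite sqnormB u1 (vdotC v u); set s := vdot u v; nra.
Qed.

Lemma continuous_sqnorm : continuous sqnorm.
Proof.
apply: (@continuous_big _ _ _ _ _ add_continuous _ _ (fun k u => u 0 k * u 0 k)).
by move=> k _ p; apply: continuousM; apply: coord_continuous.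
Qed.

Lemma compact_sqnorm_le r : compact [set p : 'rV[R]_d | sqnorm p <= r].
Proof.
pose cube := [set p : 'rV[R]_d | forall k, `[- (1 + r), 1 + r]%classic (p 0 k)].
apply: (@subclosed_compact _ _ cube).
- have -> : [set p : 'rV[R]_d | sqnorm p <= r] = sqnorm @^-1` [set x | x <= r] by [].
  apply: preimage_closed; last exact: closed_le.
  by move=> p _; apply: continuous_sqnorm.
- apply: (@rV_compact _ _ (fun _ => `[- (1 + r), 1 + r]%classic)) => _.
  exact: segment_compact.
- move=> p /= pr k; have := sqr_coord_le_sqnorm p k; rewrite /= in_itv /=.
  by move=> pk; apply/andP; split; nra.
Qed.

Lemma is_derive_sqnorm_line w e s :
  is_derive s 1 (fun t => sqnorm (w + t *: e)) (2 * vdot (w + s *: e) e).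
Proof.
have -> : (fun t => sqnorm (w + t *: e)) =
    (fun t => sqnorm w + 2 * vdot w e * t + sqnorm e * t ^+ 2).
  by apply/funext => t; rewrite sqnormD sqnormZ vdotZr; ring.
apply: is_derive_eq; rewrite vdotDl vdotZl /GRing.scale /=.
rewrite /sqnorm; ring.
Qed.

Lemma sqnorm_line_lt p e r : sqnorm p < r ->
  exists2 eps : R, 0 < eps & forall t, t \in `]- eps, eps[%R -> sqnorm (p + t *: e) < r.
Proof.
move=> pr; have line_cont : {for 0, continuous (fun t : R => sqnorm (p + t *: e))}.
  apply: continuous_comp; last exact: continuous_sqnorm.
  apply: continuousD; first exact: cst_continuous.
  by apply: continuousZ; [exact: cvg_id | exact: cst_continuous].
have := @cvgr_lt _ _ _ _ _ _ line_cont r.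
rewrite scale0r addr0 => /(_ _ pr) /nbhs_ballP[eps /= eps0 ball_eps].
exists eps => // t; rewrite in_itv /= => t_eps; apply: ball_eps.
by rewrite /ball /= sub0r normrN ltr_norml.
Qed.

(* On the unit sphere, where [1 - 2 p.u + |p|^2 |u|^2 = |u - p|^2], this is the
   Mobius transformation of the unit ball that maps [p] to the origin. *)
Definition mobius p u : 'rV[R]_d := ((1 - sqnorm p) / sqnorm (u - p)) *: (u - p) - p.

Lemma mobius_orthogonal (A : 'M[R]_d) p u :
  A *m A^T = 1%:M -> mobius (p *m A) (u *m A) = mobius p u *m A.
Proof.
move=> AAT; rewrite /mobius -mulmxBl !sqnorm_orthogonal //.
by rewrite [RHS]mulmxBl -scalemxAl mulmxBl.
Qed.

End RowEuclidean.

Section ConformalBarycenter.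
Context {R : realType} {d l : nat} {v : 'I_l -> 'rV[R]_d} {m : 'I_l -> nat}.
Hypothesis l_gt0 : (0 < l)%N.
Hypothesis v_unit : forall i, sqnorm (v i) = 1.
Hypothesis v_inj : injective v.
Let n := (\sum_(i < l) m i)%N.
Hypothesis m_lt_half : forall i, (2 * m i < n)%N.

Definition conformal_potential (p : 'rV[R]_d) : R :=
  \sum_(i < l) (m i)%:R * ln (sqnorm (p - v i)) - n%:R * ln (1 - sqnorm p).

Lemma conformal_potential0 : conformal_potential 0 = 0.
Proof.
rewrite /conformal_potential sqnorm0 subr0 ln1 mulr0 subr0.
by apply: big1 => i _; rewrite sub0r sqnormN v_unit ln1 mulr0.
Qed.

Lemma continuous_conformal_potential p :
  sqnorm p < 1 -> {for p, continuous conformal_potential}.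
Proof.
move=> p1.
have term_cont i : {for p, continuous (fun q : 'rV[R]_d => (m i)%:R * ln (sqnorm (q - v i)))}.
  apply: continuousM; first exact: cst_continuous.
  apply: continuous_comp; last exact/continuous_ln/sqnormB_unit_gt0.
  apply: continuous_comp; last exact: continuous_sqnorm.
  by apply: continuousB; [exact: cvg_id | exact: cst_continuous].
apply: continuousB.
  apply: cvg_big; [exact: add_continuous|exact: (nbhs_filter p)|].
  by move=> i _; apply: term_cont.
apply: continuousM; first exact: cst_continuous.
apply: continuous_comp; last by apply: continuous_ln; rewrite subr_gt0.
by apply: continuousB; [exact: cst_continuous | exact: continuous_sqnorm].
Qed.

Lemma separation : exists2 delta : R, 0 < delta <= 1 &
  forall p, exists j, forall i, i != j -> delta <= sqnorm (p - v i).
Proof.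
pose delta := \big[Order.min/1]_(ij : 'I_l * 'I_l | ij.1 != ij.2)
  (sqnorm (v ij.1 - v ij.2) / 4).
have dist_gt0 i j : i != j -> 0 < sqnorm (v i - v j).
  move=> ij; rewrite lt_def sqnorm_ge0 andbT sqnorm_eq0 subr_eq0.
  by apply: contra ij => /eqP/v_inj->.
have delta_itv : 0 < delta <= 1.
  apply/andP; split; last exact: bigmin_le_id.
  elim/big_ind: delta => // [x y x0 y0|[i j] /= ij]; first by rewrite lt_min x0 y0.
  by rewrite divr_gt0 ?dist_gt0.
have close_unique p i j : i != j -> sqnorm (p - v i) < delta -> delta <= sqnorm (p - v j).
  move=> ij pi; rewrite leNgt; apply/negP => pj.
  have := @bigmin_le_cond _ _ _ 1 (i, j) (fun ij => ij.1 != ij.2)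
    (fun ij => sqnorm (v ij.1 - v ij.2) / 4) ij.
  rewrite -/delta /= ler_pdivlMr // => near_ij.
  have : sqnorm (v i - v j) <= 2 * sqnorm (p - v j) + 2 * sqnorm (p - v i).
    have <- : p - v j - (p - v i) = v i - v j by rewrite opprB addrC addrA subrK.
    exact: sqnormB_le.
  lra.
exists delta => // p.
case: (pselect (exists j, sqnorm (p - v j) < delta)) => [[j pj]|none].
  by exists j => i ij; apply: (close_unique p j i) => //; rewrite eq_sym.
exists (Ordinal l_gt0) => i _; rewrite leNgt; apply/negP => pi.
by apply: none; exists i.
Qed.

Lemma conformal_potential_lower_bound p eps delta j :
  0 < eps <= 1 -> sqnorm p = (1 - eps) ^+ 2 -> 0 < delta ->
  (forall i, i != j -> delta <= sqnorm (p - v i)) ->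
  (2 * (m j)%:R - n%:R) * ln eps + (n%:R - (m j)%:R) * ln delta - n%:R * ln 2
    <= conformal_potential p.
Proof.
move=> /andP[eps0 eps1] pr delta0 far.
have p1 : sqnorm p < 1 by rewrite pr; nra.
have D_gt0 i : 0 < sqnorm (p - v i) by apply: sqnormB_unit_gt0.
have near_j : (m j)%:R * (2 * ln eps) <= (m j)%:R * ln (sqnorm (p - v j)).
  rewrite ler_wpM2l // -[2]/(2%:R) mulr_natl -lnXn // ler_ln ?posrE ?exprn_gt0 //.
  have := sqnormB_unit_ge _ _ _ (v_unit j) (_ : 0 <= 1 - eps) pr.
  by rewrite subKr; apply; lra.
have far_sum : (n%:R - (m j)%:R) * ln delta <=
    \sum_(i | i != j) (m i)%:R * ln (sqnorm (p - v i)).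
  have -> : n%:R - (m j)%:R = \sum_(i | i != j) (m i)%:R :> R.
    by rewrite /n natr_sum (bigD1 j) //= addrAC subrr add0r.
  rewrite big_distrl /=; apply: ler_sum => i ij; rewrite ler_wpM2l //.
  by rewrite ler_ln ?posrE // far.
have ball_term : n%:R * ln (1 - sqnorm p) <= n%:R * (ln 2 + ln eps).
  rewrite ler_wpM2l // -lnM ?posrE // ler_ln ?posrE ?subr_gt0 ?mulr_gt0 // pr; nra.
rewrite /conformal_potential (bigD1 j) //=; lra.
Qed.

Lemma conformal_potential_boundary : exists2 r : R, 0 < r < 1 &
  forall p, sqnorm p = r ^+ 2 -> 0 < conformal_potential p.
Proof.
have [delta /andP[delta0 delta1] isolated] := separation.
(* With this [eps], [- ln eps] exceeds [- n ln (delta / 2)] by [ln 2]. *)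
pose eps := (delta / 2) ^+ n / 2.
have q0 : 0 < (delta / 2) ^+ n by rewrite exprn_gt0 // divr_gt0.
have eps0 : 0 < eps by rewrite divr_gt0.
have eps_le : eps <= 1 / 2.
  by rewrite ler_pM2r // exprn_ile1 // ?divr_ge0 ?ler_pdivrMr //; lra.
have ln_eps : ln eps = n%:R * (ln delta - ln 2) - ln 2.
  by rewrite ln_div ?posrE ?exprn_gt0 ?divr_gt0 // lnXn ?divr_gt0 // ln_div ?posrE // mulr_natl.
exists (1 - eps); first by apply/andP; split; lra.
move=> p pr; have [j far] := isolated p.
have eps_itv : 0 < eps <= 1 by apply/andP; split; lra.
have := conformal_potential_lower_bound _ _ _ _ eps_itv pr delta0 far.
have m_j : 2 * (m j)%:R + 1 <= n%:R :> R.
  by rewrite -[2]/(2%:R) -natrM -[1]/(1%:R) -natrD ler_nat addn1 m_lt_half.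
have ln_eps_lt0 : ln eps < 0 by apply: ln_lt0; apply/andP; split; lra.
have : 0 <= (n%:R - 2 * (m j)%:R - 1) * - ln eps by apply: mulr_ge0; lra.
have : 0 <= (m j)%:R * - ln delta by rewrite mulr_ge0 ?oppr_ge0 ?ln_le0.
have : 0 < ln (2 : R) by apply: ln_gt0; lra.
lra.
Qed.

Lemma conformal_potential_interior_min : exists2 r : R, 0 < r < 1 &
  exists2 p, sqnorm p < r ^+ 2 &
    forall q, sqnorm q <= r ^+ 2 -> conformal_potential p <= conformal_potential q.
Proof.
have [r /andP[r0 r1] boundary] := conformal_potential_boundary.
pose K := [set q : 'rV[R]_d | sqnorm q <= r ^+ 2].
have r2 : r ^+ 2 < 1 by nra.
have K0 : K 0 by rewrite /K /= sqnorm0 sqr_ge0.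
have K_compact : compact K := compact_sqnorm_le _.
have Phi_cont : {within K, continuous conformal_potential}.
  apply: continuous_in_subspaceT => q; rewrite inE => Kq.
  exact/continuous_conformal_potential/(le_lt_trans Kq).
have [p Kp pmin] := compact_EVT_min (ex_intro _ 0 K0) K_compact Phi_cont.
exists r; first by apply/andP.
exists p; last by move=> q Kq; apply: pmin; rewrite inE.
rewrite inE /K /= le_eqVlt in Kp; case/orP: Kp => [/eqP pr|//].
have := pmin 0; rewrite inE conformal_potential0 => /(_ K0).
by have := boundary p pr; lra.
Qed.

Lemma is_derive_conformal_potential_line (p e : 'rV[R]_d) (s : R) :
  sqnorm (p + s *: e) < 1 ->
  is_derive s 1 (fun t => conformal_potential (p + t *: e))
    (2 * (\sum_i (m i)%:R * (vdot (p + s *: e - v i) e / sqnorm (p + s *: e - v i))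
          + n%:R * (vdot (p + s *: e) e / (1 - sqnorm (p + s *: e))))).
Proof.
move=> ps1.
have ln_sqnorm_line w : 0 < sqnorm (w + s *: e) ->
    is_derive s 1 (fun t => ln (sqnorm (w + t *: e)))
      (2 * vdot (w + s *: e) e / sqnorm (w + s *: e)).
  by move=> w0; apply: is_derive_ln_comp => //; exact: is_derive_sqnorm_line.
have atom_term i : is_derive s 1 (fun t => (m i)%:R * ln (sqnorm (p + t *: e - v i)))
    ((m i)%:R * (2 * vdot (p + s *: e - v i) e / sqnorm (p + s *: e - v i))).
  under eq_fun do rewrite addrAC.
  rewrite addrAC; apply: is_deriveZ; apply: ln_sqnorm_line.
  by rewrite addrAC; apply: sqnormB_unit_gt0.
have ball_term : is_derive s 1 (fun t => n%:R * ln (1 - sqnorm (p + t *: e)))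
    (n%:R * ((0 - 2 * vdot (p + s *: e) e) / (1 - sqnorm (p + s *: e)))).
  apply: is_deriveZ; apply: is_derive_ln_comp; last by rewrite subr_gt0.
  by have := is_deriveB (is_derive_cst (1 : R) s 1) (is_derive_sqnorm_line p e s).
have := is_deriveB (is_derive_sumf atom_term) ball_term.
move/is_derive_eq; apply.
rewrite mulrDr mulr_sumr sub0r mulNr mulrN opprK.
by congr (_ + _); [apply: eq_bigr => i _|]; ring.
Qed.

Lemma conformal_potential_critical : exists p, sqnorm p < 1 /\
  \sum_i ((m i)%:R / sqnorm (v i - p)) *: (v i - p) = (n%:R / (1 - sqnorm p)) *: p.
Proof.
have [r /andP[r0 r1] [p pr pmin]] := conformal_potential_interior_min.
have r2 : r ^+ 2 < 1 by nra.
exists p; split; first exact: lt_trans pr r2.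
apply: vdotI => e.
pose g t := conformal_potential (p + t *: e).
have [eps eps0 near_p] := sqnorm_line_lt _ e _ pr.
have g_min t : t \in `]- eps, eps[%R -> g 0 <= g t.
  by move=> t_eps; rewrite /g scale0r addr0; apply/pmin/ltW/near_p.
have g_der t : t \in `]- eps, eps[%R -> derivable g t 1.
  move=> t_eps; apply: ex_derive.
  exact/is_derive_conformal_potential_line/(lt_trans _ r2)/near_p.
have g'0 : is_derive (0 : R) 1 g 0.
  apply: (derive1_at_min _ g_der) g_min; first lra.
  by rewrite in_itv /=; apply/andP; split; lra.
have p1 : sqnorm (p + 0 *: e) < 1 by rewrite scale0r addr0 (lt_trans pr r2).
have := @derive_val _ _ _ _ _ _ _ g'0.
rewrite (@derive_val _ _ _ _ _ _ _ (is_derive_conformal_potential_line _ _ _ p1)).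
rewrite scale0r addr0 vdot_suml vdotZl.
have -> : \sum_i vdot (((m i)%:R / sqnorm (v i - p)) *: (v i - p)) e =
    - \sum_i (m i)%:R * (vdot (p - v i) e / sqnorm (p - v i)).
  rewrite -sumrN; apply: eq_bigr => i _.
  by rewrite vdotZl sqnormBC -[v i - p]opprB vdotNl; ring.
lra.
Qed.

Theorem conformal_barycenter : exists p, sqnorm p < 1 /\
  \sum_i (m i)%:R *: mobius p (v i) = 0.
Proof.
have [p [p1 crit]] := conformal_potential_critical.
exists p; split => //.
have p1_neq0 : 1 - sqnorm p != 0 by rewrite subr_eq0 gt_eqF.
transitivity ((1 - sqnorm p) *: \sum_i ((m i)%:R / sqnorm (v i - p)) *: (v i - p)
              - n%:R *: p).
  rewrite scaler_sumr /n natr_sum scaler_suml -sumrB; apply: eq_bigr => i _.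
  by rewrite /mobius scalerBr !scalerA mulrCA.
by rewrite crit scalerA mulrCA mulfV // mulr1 subrr.
Qed.

End ConformalBarycenter.

Section Householder.
Context {R : realType} {d : nat}.
Implicit Types (u w : 'rV[R]_d).

Definition householder w : 'M[R]_d := 1%:M - (2 / sqnorm w) *: (w^T *m w).

Lemma householder_tr w : (householder w)^T = householder w.
Proof. by rewrite /householder linearB /= linearZ /= trmx1 trmx_mul trmxK. Qed.

Lemma householder_invol w : w != 0 -> householder w *m householder w = 1%:M.
Proof.
rewrite -sqnorm_eq0 => w0.
have WW : (w^T *m w) *m (w^T *m w) = sqnorm w *: (w^T *m w).
  by rewrite mulmxA -(mulmxA w^T) mulmx_tr_vdot mul_mx_scalar scalemxAl.
rewrite /householder mulmxBl !mulmxBr !mul1mx mulmx1 -!scalemxAl -!scalemxAr WW !scalerA.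
have -> : 2 / sqnorm w * (2 / sqnorm w) * sqnorm w = 2 / sqnorm w + 2 / sqnorm w.
  by field.
rewrite scalerDl; set X := _ *: (w^T *m w).
have -> : X - (X + X) = - X by rewrite opprD addrA subrr sub0r.
by rewrite opprK subrK.
Qed.

Lemma householder_swap u w : sqnorm u = sqnorm w -> u != w ->
  u *m householder (u - w) = w.
Proof.
move=> uw; rewrite -subr_eq0 -sqnorm_eq0 => uw0.
have uuw : 2 / sqnorm (u - w) * vdot u (u - w) = 1.
  move: uw0; rewrite sqnormB vdotBr -/(sqnorm u) uw => uw0.
  by field.
rewrite /householder mulmxBr mulmx1 -scalemxAr mulmxA mulmx_tr_vdot mul_scalar_mx scalerA uuw.
by rewrite scale1r opprB addrC subrK.
Qed.

Lemma orthogonal_det (A : 'M[R]_d) : A *m A^T = 1%:M -> \det A = 1 \/ \det A = -1.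
Proof.
move=> AAT; have : \det A ^+ 2 = 1 by rewrite expr2 -{2}det_tr -det_mulmx AAT det1.
by move/eqP; rewrite sqrf_eq1 => /orP[] /eqP; [left|right].
Qed.

End Householder.

Section Rotation.
Context {R : realType}.

Definition north : 'rV[R]_3 := delta_mx 0 ord_max.

Lemma sqnorm_north : sqnorm north = 1.
Proof. by rewrite /sqnorm vdot_delta mxE !eqxx. Qed.

Lemma rotation_to_north (u : 'rV[R]_3) : sqnorm u = 1 ->
  exists O, is_SO3 O /\ u *m O^T = north.
Proof.
move=> u1; have [->|u_north] := eqVneq u north.
  by exists 1%:M; rewrite /is_SO3 trmx1 !mulmx1 det1.
pose H := householder (u - north).
have HT : H^T = H := householder_tr _.
have HH : H *m H = 1%:M by apply: householder_invol; rewrite subr_eq0.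
have uH : u *m H = north by apply: householder_swap; rewrite ?sqnorm_north.
have HHT : H *m H^T = 1%:M by rewrite HT.
have [detH|detH] := orthogonal_det _ HHT.
  by exists H; rewrite /is_SO3 HT HH detH.
(* A reflection fixing [north] corrects the sign of the determinant. *)
pose D : 'M[R]_3 := diag_mx (\row_i (if i == ord0 then -1 else 1)).
have DT : D^T = D := tr_diag_mx _.
have DD : D *m D = 1%:M.
  by rewrite mulmx_diag; apply/matrixP => i j; rewrite !mxE; case: (i == ord0); rewrite ?mulrNN mulr1.
have detD : \det D = -1.
  by rewrite det_diag !big_ord_recr big_ord0 /= !mxE /= mul1r !mulr1.
have northD : north *m D = north.
  rewrite mul_mx_diag; apply/rowP => k; rewrite !mxE eqxx /=.
  by case: eqP => [->|]; rewrite ?mulr1 ?mul0r.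
exists (D *m H); split; first split.
- by rewrite trmx_mul HT DT mulmxA -(mulmxA H) DD mulmx1 HH.
- by rewrite det_mulmx detD detH mulrNN mulr1.
- by rewrite trmx_mul HT DT mulmxA uH northD.
Qed.

Lemma rotation_to_north_scaled (p : 'rV[R]_3) :
  exists O, is_SO3 O /\ p *m O^T = Num.sqrt (sqnorm p) *: north.
Proof.
have [->|p0] := eqVneq p 0.
  by exists 1%:M; rewrite /is_SO3 trmx1 !mulmx1 det1 sqnorm0 sqrtr0 scale0r.
set c := Num.sqrt (sqnorm p).
have c0 : 0 < c by rewrite sqrtr_gt0 lt_def sqnorm_eq0 p0 sqnorm_ge0.
have u1 : sqnorm (c^-1 *: p) = 1.
  by rewrite sqnormZ exprVn sqr_sqrtr ?sqnorm_ge0 ?mulVf ?sqnorm_eq0.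
have [Q [Q_SO uQ]] := rotation_to_north _ u1.
exists Q; split => //.
by rewrite -[p](scalerKV (lt0r_neq0 c0)) -scalemxAl uQ.
Qed.

End Rotation.

Section SphericalCoordinates.
Context {R : realType}.

Lemma ord3P (P : 'I_3 -> Prop) : P ord0 -> P (inord 1) -> P ord_max -> forall k, P k.
Proof.
move=> P0 P1 P2 [[|[|[|//]]] hk]; [move: P0|move: P1|move: P2];
  by congr P; apply: val_inj; rewrite /= ?inordK.
Qed.

Lemma sum_ord3 (F : 'I_3 -> R) : \sum_k F k = F ord0 + F (inord 1) + F ord_max.
Proof.
rewrite !big_ord_recr big_ord0 /= add0r.
by congr (F _ + F _ + F _); apply: val_inj; rewrite /= ?inordK.
Qed.

Lemma cos_atan_neq0 (x : R) : cos (atan x) != 0.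
Proof. by rewrite cos_atan invr_neq0 // sqrtr_eq0 -ltNge ltr_pwDl ?sqr_ge0. Qed.

Lemma sqr_cos_atan (x : R) : cos (atan x) ^+ 2 = (1 + x ^+ 2)^-1.
Proof. by rewrite -[in RHS](atanK x) -cos2_tan2 ?cos_atan_neq0 // invrK. Qed.

Lemma sin_2atan (x : R) : sin (2 * atan x) = 2 * x / (1 + x ^+ 2).
Proof.
have sin_atan : sin (atan x) = x * cos (atan x).
  by rewrite -[X in X * _](atanK x) /tan mulfVK ?cos_atan_neq0.
rewrite mulr_natl sin_mulr2n sin_atan -mulr_natl -sqr_cos_atan; ring.
Qed.

Lemma cos_2atan (x : R) : cos (2 * atan x) = (1 - x ^+ 2) / (1 + x ^+ 2).
Proof.
have x1 : 1 + x ^+ 2 != 0 by rewrite lt0r_neq0 // ltr_pwDl ?sqr_ge0.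
by rewrite mulr_natl cos_mulr2n sqr_cos_atan -mulr_natl; field.
Qed.

Lemma atan_tan_half (theta : R) : 0 <= theta < pi -> 2 * atan (tan (theta / 2)) = theta.
Proof.
move=> /andP[th0 thpi]; have pi0 := @pi_gt0 R.
by rewrite tanK ?in_itv /=; [rewrite mulrC divfK | apply/andP; split; lra].
Qed.

Lemma sqnorm_sph (theta phi : R) : sqnorm (sph theta phi)^T = 1.
Proof.
rewrite sqnorm_trmx !big_ord_recr big_ord0 /= !mxE /= add0r !exprMn.
by rewrite -mulrDr cos2Dsin2 mulr1 addrC cos2Dsin2.
Qed.

Lemma sqnorm_sph_sub_north (c theta phi : R) :
  sqnorm ((sph theta phi)^T - c *: north) = 1 + c ^+ 2 - 2 * c * cos theta.
Proof.
rewrite sqnormB sqnormZ sqnorm_north sqnorm_sph vdotZr vdot_delta !mxE /=; ring.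
Qed.

Lemma mobius_north_south (c phi : R) : 0 <= c < 1 ->
  mobius (c *: north) (sph pi phi)^T = (sph pi phi)^T.
Proof.
move=> /andP[c0 c1]; rewrite /mobius sqnorm_sph_sub_north sqnormZ sqnorm_north cospi.
have E0 : 1 + c ^+ 2 - 2 * c * -1 != 0 by rewrite lt0r_neq0 //; nra.
apply/rowP => k; rewrite !mxE sinpi cospi !mul0r.
by case: k => -[|[|[|//]]] /= _; field.
Qed.

Lemma mobius_north_sph_atan (c t phi : R) : 0 <= c < 1 ->
  mobius (c *: north) (sph (2 * atan t) phi)^T =
  (sph (2 * atan ((1 + c) / (1 - c) * t)) phi)^T.
Proof.
move=> /andP[c0 c1]; rewrite /mobius sqnorm_sph_sub_north sqnormZ sqnorm_north.
have t1 : 1 + t ^+ 2 != 0 by rewrite lt0r_neq0 // ltr_pwDl ?sqr_ge0.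
have c1' : 1 - c != 0 by rewrite subr_eq0 gt_eqF.
have E0 : (1 - c) ^+ 2 + (1 + c) ^+ 2 * t ^+ 2 != 0.
  have : 0 < (1 - c) ^+ 2 by rewrite exprn_gt0 // subr_gt0.
  have : 0 <= (1 + c) ^+ 2 * t ^+ 2 by rewrite mulr_ge0 ?sqr_ge0.
  by move=> ? ?; rewrite lt0r_neq0 //; lra.
apply/rowP => k; rewrite !mxE !sin_2atan !cos_2atan.
by case: k => -[|[|[|//]]] /= _; field; rewrite exprMn c1' E0 t1.
Qed.

Lemma mobius_north_sph (c theta phi : R) : 0 <= c < 1 -> 0 <= theta <= pi ->
  mobius (c *: north) (sph theta phi)^T = (f_alpha (2 * c / (1 + c)) theta phi)^T.
Proof.
move=> c01 /andP[th0 thpi]; rewrite /f_alpha /f_theta.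
have [->|th_neq] := eqVneq theta pi; first exact: mobius_north_south.
have /andP[c0 c1] := c01.
have -> : (1 - 2 * c / (1 + c))^-1 = (1 + c) / (1 - c).
  by field; rewrite !lt0r_neq0 //; lra.
have th_lt : 0 <= theta < pi by rewrite th0 lt_neqAle th_neq thpi.
by rewrite -{1}(atan_tan_half _ th_lt); apply: mobius_north_sph_atan.
Qed.

Lemma polar_coords (x y : R) : exists2 phi, 0 <= phi <= 2 * pi &
  x = Num.sqrt (x ^+ 2 + y ^+ 2) * cos phi /\ y = Num.sqrt (x ^+ 2 + y ^+ 2) * sin phi.
Proof.
set rho := Num.sqrt _.
have pi0 := @pi_gt0 R.
have rho2 : rho ^+ 2 = x ^+ 2 + y ^+ 2 by rewrite sqr_sqrtr // addr_ge0 ?sqr_ge0.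
have [rho0|rho_neq0] := eqVneq rho 0.
  have [x0 y0] : x = 0 /\ y = 0.
    have := sqr_ge0 x; have := sqr_ge0 y; rewrite rho0 expr0n /= in rho2.
    by split; apply/eqP; rewrite -sqrf_eq0; apply/eqP; lra.
  by exists 0; rewrite ?x0 ?y0 ?rho0 ?mul0r //; apply/andP; split; lra.
have rho_gt0 : 0 < rho by rewrite lt_def rho_neq0 sqrtr_ge0.
set t := x / rho.
have t_sq : t ^+ 2 <= 1.
  rewrite /t expr_div_n ler_pdivrMr ?exprn_gt0 // mul1r rho2 lerDl; exact: sqr_ge0.
have t_bounds : -1 <= t <= 1 by apply/andP; split; nra.
have t_itv : t \in `[-1, 1]%R by rewrite in_itv.
set phi0 := acos t.
have phi0_itv : 0 <= phi0 <= pi by rewrite acos_ge0 ?acos_lepi.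
have cos_phi0 : cos phi0 = t by rewrite acosK.
have sin_phi0 : sin phi0 = `|y| / rho.
  rewrite sin_acos //.
  have -> : 1 - t ^+ 2 = (y / rho) ^+ 2.
    by rewrite /t !expr_div_n (_ : y ^+ 2 = rho ^+ 2 - x ^+ 2); [field | lra].
  by rewrite sqrtr_sqr normf_div (gtr0_norm rho_gt0).
have rho_t : x = rho * t by rewrite /t mulrC divfK.
have [y0|y_neg] := leP 0 y.
  exists phi0; first by apply/andP; split; lra.
  rewrite cos_phi0 sin_phi0 ger0_norm //.
  by split; [exact: rho_t | rewrite mulrC divfK].
exists (2 * pi - phi0); first by apply/andP; split; lra.
rewrite mulr_natl cosB sinB cos2pi sin2pi !mul1r !mul0r addr0 sub0r.
rewrite cos_phi0 sin_phi0 ltr0_norm // mulNr opprK.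
by split; [exact: rho_t | rewrite mulrC divfK].
Qed.

Lemma sph_coords_of_unit (w : 'cV[R]_3) : unit_vec w -> exists theta phi, sph_coords w theta phi.
Proof.
rewrite /unit_vec sum_ord3.
set x := w ord0 0; set y := w (inord 1) 0; set z := w ord_max 0 => w1.
have z_bounds : -1 <= z <= 1.
  by have := sqr_ge0 x; have := sqr_ge0 y; move=> *; apply/andP; split; nra.
have sin_acos_z : sin (acos z) = Num.sqrt (x ^+ 2 + y ^+ 2).
  by rewrite sin_acos // -w1 addrK.
have [phi phi_itv [ex ey]] := polar_coords x y.
exists (acos z), phi; split; first by rewrite acos_ge0 ?acos_lepi.
split => //; apply/colP; apply: ord3P; rewrite !mxE /=.
- by rewrite sin_acos_z -ex.
- by rewrite sin_acos_z -ey inordK.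
- by rewrite acosK ?in_itv.
Qed.

Lemma sph_coords_family (I : Type) (w : I -> 'cV[R]_3) : (forall i, unit_vec (w i)) ->
  exists theta phi : I -> R, forall i, sph_coords (w i) (theta i) (phi i).
Proof.
move=> w1; have /choice[q sc] : forall i, exists q : R * R, sph_coords (w i) q.1 q.2.
  by move=> i; have [theta [phi sc]] := sph_coords_of_unit _ (w1 i); exists (theta, phi).
by exists (fst \o q), (snd \o q).
Qed.

End SphericalCoordinates.

Lemma sorted_weights_lt_half {l : nat} {l_gt0 : (0 < l)%N} {m : 'I_l -> nat} :
  (forall i j : 'I_l, (i <= j)%N -> (m j <= m i)%N) ->
  (m (Ordinal l_gt0) < \sum_(i < l | i != Ordinal l_gt0) m i)%N ->
  forall i, (2 * m i < \sum_(i < l) m i)%N.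
Proof.
move=> sorted heavy i; have := sorted (Ordinal l_gt0) i isT.
have -> : (\sum_(j < l) m j = m (Ordinal l_gt0) + \sum_(j < l | j != Ordinal l_gt0) m j)%N.
  by rewrite (bigD1 (Ordinal l_gt0)).
lia.
Qed.

Theorem lemma4 (R : realType) (l n : nat) (hl : (0 < l)%N)
  (v : 'I_l -> 'cV[R]_3) (m : 'I_l -> nat)
  (hunit : forall i, unit_vec (v i))
  (hdist : injective v)
  (hsort : forall i j : 'I_l, (i <= j)%N -> (m j <= m i)%N)
  (hsum : (\sum_(i < l) m i)%N = n)
  (hn : (3 <= n)%N)
  (hm1 : (m (Ordinal hl) < \sum_(i < l | i != Ordinal hl) m i)%N) :
  exists (O : 'M[R]_3) (alpha : R),
    is_SO3 O /\ 0 <= alpha < 1 /\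
    exists theta phi : 'I_l -> R,
      (forall i, sph_coords (O *m v i) (theta i) (phi i)) /\
      \sum_(i < l) (m i)%:R *: f_alpha alpha (theta i) (phi i) = 0.
Proof.
pose u i := (v i)^T.
have u_unit i : sqnorm (u i) = 1 by rewrite sqnorm_trmx; exact: hunit.
have u_inj : injective u by move=> i j /trmx_inj /hdist.
have [p [p1 bary]] := conformal_barycenter hl u_unit u_inj (sorted_weights_lt_half hsort hm1).
have [Q [Q_SO pQ]] := rotation_to_north_scaled p.
set c := Num.sqrt (sqnorm p) in pQ.
have c_itv : 0 <= c < 1 by rewrite sqrtr_ge0 -sqrtr1 ltr_sqrt.
have QT_orth : Q^T *m Q^T^T = 1%:M by rewrite trmxK; case: Q_SO.
have Qv_unit i : unit_vec (Q *m v i).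
  by rewrite /unit_vec -sqnorm_trmx trmx_mul sqnorm_orthogonal //; apply: u_unit.
have [theta [phi sc]] := sph_coords_family _ _ Qv_unit.
exists Q, (2 * c / (1 + c)); split => //; split.
  by have /andP[c0 c1] := c_itv; rewrite divr_ge0 ?ltr_pdivrMr /=; lra.
exists theta, phi; split => //.
apply: trmx_inj; rewrite trmx0 -(mul0mx _ Q^T) -bary linear_sum mulmx_suml.
apply: eq_bigr => i _; have [th_itv [_ wi]] := sc i.
by rewrite linearZ /= -scalemxAl -mobius_north_sph // -wi trmx_mul -pQ mobius_orthogonal.
Qed.
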